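(* Let $p,q$ be smooth strictly positive probability densities on $[0,1]$ with CDFs $F_p,F_q$ and inverse CDFs $F_p^{-1},F_q^{-1}:[0,1]\to[0,1]$. (i) For $V\in C^\infty([0,1])$ and $\mathcal V(p)=\int_0^1V p\,dx$: $\mathrm D_{\mathrm T,\mathcal V}(p\|q)=\int_0^1\mathrm D_V(F_p^{-1}(s)\|F_q^{-1}(s))\,ds$, with $\mathrm D_V(z_1\|z_2)=V(z_1)-V(z_2)-V'(z_2)(z_1-z_2)$. (ii) For $\tilde W\in C^\infty([-1,1])$ even and $\mathcal W(p)=\tfrac12\int_0^1\!\!\int_0^1\tilde W(x-\tilde x)p(x)p(\tilde x)\,dx\,d\tilde x$: $\mathrm D_{\mathrm T,\mathcal W}(p\|q)=\tfrac12\int_0^1\!\!\int_0^1\mathrm D_{\tilde W}\big(F_p^{-1}(s)-F_p^{-1}(\tilde s)\,\|\,F_q^{-1}(s)-F_q^{-1}(\tilde s)\big)ds\,d\tilde s$, where $\mathrm D_{\tilde W}$ is defined as $\mathrm D_V$ with $\tilde W$ in place of $V$. (iii) For $U:(0,\infty)\to\mathbb R$ of class $C^2$ and $\mathcal U(p)=\int_0^1U(p(x))dx$, set $\tilde U(z)=zU(1/z)$ for $z>0$. Then $\mathrm D_{\mathrm T,\mathcal U}(p\|q)=\int_0^1\mathrm D_{\tilde U}\big((F_p^{-1})'(s)\,\|\,(F_q^{-1})'(s)\big)ds$, with $\mathrm D_{\tilde U}(z_1\|z_2)=\tilde U(z_1)-\tilde U(z_2)-\tilde U'(z_2)(z_1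-z_2)$.
   Context: On $[0,1]$ the optimal transport map from $q$ to $p$ is the monotone map $T=F_p^{-1}\circ F_q$, which satisfies $p(T(x))T'(x)=q(x)$. For a smooth functional $\mathcal F$ on such densities with $L^2$ first variation $\frac{\delta\mathcal F}{\delta q}(q)(x)$ (for $\mathcal V,\mathcal W,\mathcal U$ these are $V(x)$, $\int_0^1\tilde W(x-\tilde x)q(\tilde x)d\tilde x$, $U'(q(x))$), the transport Bregman divergence is $$\mathrm D_{\mathrm T,\mathcal F}(p\|q)=\mathcal F(p)-\mathcal F(q)-\int_0^1\frac{d}{dx}\Big(\frac{\delta\mathcal F}{\delta q}(q)(x)\Big)\,(T(x)-x)\,q(x)\,dx .$$ *)

From Stdlib Require Import Reals.
From Coquelicot Require Import Coquelicot.
Open Scope R_scope.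

(** C^infinity on all of R. A function in C^infinity([a,b]) is, by convention
    (Whitney/Seeley), the restriction of a C^infinity function on R. *)
Definition smooth (f : R -> R) : Prop :=
  forall (n : nat) (x : R), ex_derive (Derive_n f n) x.

Definition C2_pos (U : R -> R) : Prop :=
  forall x : R, 0 < x ->
    ex_derive U x /\ ex_derive (Derive U) x /\ continuous (Derive (Derive U)) x.

Definition density01 (p : R -> R) : Prop :=
  (forall x, 0 <= x <= 1 -> 0 < p x) /\ RInt p 0 1 = 1.

Definition cdf (p : R -> R) (x : R) : R := RInt p 0 x.

Definition is_inv_cdf (p G : R -> R) : Prop :=
  forall s, 0 <= s <= 1 -> 0 <= G s <= 1 /\ cdf p (G s) = s.

(** Monotone optimal transport map from q to p: T = F_p^{-1} o F_q. *)
Definition transport_map (Gp : R -> R) (q : R -> R) (x : R) : R :=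
  Gp (cdf q x).

Definition bregman (f : R -> R) (z1 z2 : R) : R :=
  f z1 - f z2 - Derive f z2 * (z1 - z2).

(** Transport Bregman divergence of a functional F:
    F(p) - F(q) - int_0^1 d/dx (dF/dq(q))(x) (T(x) - x) q(x) dx,
    where [dFq] is the L^2 first variation dF/dq(q) as a function of x. *)
Definition transport_bregman (Fp Fq : R) (dFq : R -> R) (T q : R -> R) : R :=
  Fp - Fq - RInt (fun x => Derive dFq x * (T x - x) * q x) 0 1.

Definition potential_fun (V p : R -> R) : R := RInt (fun x => V x * p x) 0 1.
Definition potential_var (V : R -> R) (q : R -> R) (x : R) : R := V x.

Definition interaction_fun (W p : R -> R) : R :=
  / 2 * RInt (fun x => RInt (fun xt => W (x - xt) * p x * p xt) 0 1) 0 1.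
Definition interaction_var (W q : R -> R) (x : R) : R :=
  RInt (fun xt => W (x - xt) * q xt) 0 1.

Definition internal_fun (U p : R -> R) : R := RInt (fun x => U (p x)) 0 1.
Definition internal_var (U q : R -> R) (x : R) : R := Derive U (q x).

Definition Utilde (U : R -> R) (z : R) : R := z * U (/ z).

(** Every integral in the transport Bregman
    divergence is rewritten in quantile coordinates [x = G s]: the inverse CDF
    [G] of [r] pushes the Lebesgue measure on [0,1] forward to [r dx]
    ([RInt_pushforward]), and along [x = Gq s] the displacement [T x - x]
    becomes [Gp s - Gq s] ([RInt_transport_term]).
    - (i)  the potential energy then gives the claim by linearity;
    - (ii) the interaction energy becomes a double integral; evenness of [W]
           and oddness of [W'] symmetrize the cross term, and Fubini's theorem
           for continuous integrands ([RInt_swap01]) identifies both halves;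
    - (iii) the internal energy becomes [int Utilde (1 / r o G)]; since
           [G' = 1 / r o G] ([inv_cdf_is_derive]) the cross term matches the
           Bregman one after an integration by parts ([RInt_internal_by_parts]).
    Since [G] is only given on [0,1], it is extended to the line by clamping
    ([extend01]); this extension is continuous ([continuous_of_incr_comp]). *)

From Stdlib Require Import Reals Lra Ranalysis5.
From Coquelicot Require Import Coquelicot.
Open Scope R_scope.

Lemma continuous_mult_R (f g : R -> R) x :
  continuous f x -> continuous g x -> continuous (fun y => f y * g y) x.
Proof. intros; apply (continuous_mult f g x); auto. Qed.

Lemma continuous_minus_R (f g : R -> R) x :
  continuous f x -> continuous g x -> continuous (fun y => f y - g y) x.
Proof. intros; apply (continuous_minus f g x); auto. Qed.

Lemma continuous_plus_R (f g : R -> R) x :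
  continuous f x -> continuous g x -> continuous (fun y => f y + g y) x.
Proof. intros; apply (continuous_plus f g x); auto. Qed.

Lemma continuous_comp_R (f g : R -> R) x :
  continuous f x -> continuous g (f x) -> continuous (fun y => g (f y)) x.
Proof. intros; apply (continuous_comp f g x); auto. Qed.

Lemma continuous_const_R (c x : R) : continuous (fun _ : R => c) x.
Proof. apply continuous_const. Qed.

Lemma continuous_id_R (x : R) : continuous (fun y : R => y) x.
Proof. apply continuous_id. Qed.

Create HintDb cont.
#[local] Hint Resolve continuous_mult_R continuous_minus_R continuous_plus_R continuous_const_R
  continuous_id_R : cont.
#[local] Hint Extern 3 (continuous (fun _ => _ _) _) =>
  simple apply continuous_comp_R : cont.

Lemma is_derive_mult_R (f g : R -> R) x a b :
  is_derive f x a -> is_derive g x b -> is_derive (fun y => f y * g y) x (a * g x + f x * b).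
Proof. intros; apply (is_derive_mult (K:=R_AbsRing)); auto. intros; apply Rmult_comm. Qed.

Lemma is_derive_minus_R (f g : R -> R) x a b :
  is_derive f x a -> is_derive g x b -> is_derive (fun y => f y - g y) x (a - b).
Proof. intros; apply (is_derive_minus (K:=R_AbsRing) (V:=R_NormedModule)); auto. Qed.

Lemma is_derive_comp_R (f g : R -> R) x a b :
  is_derive f (g x) a -> is_derive g x b -> is_derive (fun y => f (g y)) x (b * a).
Proof. intros; apply (is_derive_comp (K:=R_AbsRing) (V:=R_NormedModule)); auto. Qed.

Lemma is_derive_eq (f : R -> R) (x l l' : R) : is_derive f x l -> l = l' -> is_derive f x l'.
Proof. intros H ->; exact H. Qed.

Lemma ex_derive_continuous_R (f : R -> R) x : ex_derive f x -> continuous f x.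
Proof. apply (ex_derive_continuous (K:=R_AbsRing) (V:=R_NormedModule)). Qed.

Lemma ex_RInt_cont (f : R -> R) a b : (forall x, continuous f x) -> ex_RInt f a b.
Proof. intros Hf; apply (ex_RInt_continuous (V:=R_CompleteNormedModule)); auto. Qed.

Lemma RInt_ext01 (f g : R -> R) :
  (forall x, 0 < x < 1 -> f x = g x) -> RInt f 0 1 = RInt g 0 1.
Proof.
  intros H; apply RInt_ext; intros x Hx.
  rewrite Rmin_left, Rmax_right in Hx by lra; auto.
Qed.

Lemma RInt_minus_R (f g : R -> R) a b : ex_RInt f a b -> ex_RInt g a b ->
  RInt (fun x => f x - g x) a b = RInt f a b - RInt g a b.
Proof. intros; apply (RInt_minus f g a b); auto. Qed.

Lemma RInt_plus_R (f g : R -> R) a b : ex_RInt f a b -> ex_RInt g a b ->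
  RInt (fun x => f x + g x) a b = RInt f a b + RInt g a b.
Proof. intros; apply (RInt_plus f g a b); auto. Qed.

Lemma RInt_minus3 (f g h : R -> R) a b :
  (forall x, continuous f x) -> (forall x, continuous g x) -> (forall x, continuous h x) ->
  RInt (fun x => f x - g x - h x) a b = RInt f a b - RInt g a b - RInt h a b.
Proof.
  intros Hf Hg Hh; rewrite !RInt_minus_R; auto using ex_RInt_cont with cont.
Qed.

Lemma RInt_mult_const_r (f : R -> R) a b c : ex_RInt f a b ->
  RInt (fun x => f x * c) a b = RInt f a b * c.
Proof.
  intros H; rewrite Rmult_comm; change (c * RInt f a b) with (scal c (RInt f a b)).
  rewrite <- (RInt_scal f a b c H).
  apply RInt_ext; intros; unfold scal; simpl; unfold mult; simpl; ring.
Qed.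

Lemma RInt_zero_R a b : RInt (fun _ : R => 0) a b = 0.
Proof.
  rewrite (RInt_const (V:=R_CompleteNormedModule)).
  unfold scal; simpl; unfold mult; simpl; ring.
Qed.

Lemma is_derive_primitive (f : R -> R) t : (forall x, continuous f x) ->
  is_derive (fun u => RInt f 0 u) t (f t).
Proof.
  intros Hf; apply (is_derive_RInt f (fun u => RInt f 0 u) 0 t); auto.
  apply filter_forall; intros b; apply (RInt_correct (V:=R_CompleteNormedModule)).
  apply ex_RInt_cont; auto.
Qed.

Lemma RInt_interior_derive (Fn f : R -> R) :
  (forall t, 0 < t < 1 -> is_derive Fn t (f t)) ->
  (forall t, continuous Fn t) -> (forall t, continuous f t) ->
  RInt f 0 1 = Fn 1 - Fn 0.
Proof.
  intros HD HF Hf.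
  destruct (MVT_gen (fun t => RInt f 0 t - Fn t) 0 1 (fun _ => 0)) as [c [_ Hc]].
  - intros x Hx; rewrite Rmin_left, Rmax_right in Hx by lra.
    apply (is_derive_eq _ _ (f x - f x)); [|lra].
    apply is_derive_minus_R; auto; apply is_derive_primitive; auto.
  - intros x _; apply continuity_pt_filterlim, continuous_minus_R; auto.
    apply ex_derive_continuous_R; eexists; apply is_derive_primitive; auto.
  - rewrite (RInt_point (V:=R_CompleteNormedModule)) in Hc.
    unfold zero in Hc; simpl in Hc; lra.
Qed.

Lemma continuity_2d_fst (f : R -> R) x y :
  continuous f x -> continuity_2d_pt (fun u v => f u) x y.
Proof.
  intros H; apply (continuity_1d_2d_pt_comp f (fun u v => u)).
  - apply continuity_pt_filterlim; auto.
  - apply continuity_2d_pt_id1.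
Qed.

Lemma continuity_2d_snd (f : R -> R) x y :
  continuous f y -> continuity_2d_pt (fun u v => f v) x y.
Proof.
  intros H; apply (continuity_1d_2d_pt_comp f (fun u v => v)).
  - apply continuity_pt_filterlim; auto.
  - apply continuity_2d_pt_id2.
Qed.

Lemma continuity_2d_comp (f : R -> R) (g : R -> R -> R) x y :
  continuity_2d_pt g x y -> continuous f (g x y) ->
  continuity_2d_pt (fun u v => f (g u v)) x y.
Proof. intros; apply continuity_1d_2d_pt_comp; auto; apply continuity_pt_filterlim; auto. Qed.

#[local] Hint Resolve continuity_2d_fst continuity_2d_snd continuity_2d_pt_mult
  continuity_2d_pt_minus continuity_2d_pt_id1 continuity_2d_pt_id2 : cont.
#[local] Hint Extern 3 (continuity_2d_pt (fun _ _ => _ (_ _ _)) _ _) =>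
  simple apply continuity_2d_comp : cont.

Lemma continuity_2d_partial (k : R -> R -> R) x y :
  continuity_2d_pt k x y -> continuous (fun u => k u y) x.
Proof.
  intros H; apply continuity_pt_filterlim; intros eps Heps.
  destruct (H (mkposreal eps Heps)) as [d Hd]; exists d; split; [apply cond_pos|].
  intros u [_ Hu]; simpl in *; unfold R_dist in *; apply Hd; auto.
  rewrite Rminus_eq_0, Rabs_R0; apply cond_pos.
Qed.

(* A parameter integral of a jointly continuous integrand is continuous in
   the parameter (uniform continuity on compact rectangles). *)
Lemma continuous_RInt_param_le (k : R -> R -> R) a b :
  a <= b -> (forall x y, continuity_2d_pt k x y) ->
  forall c, continuous (fun y => RInt (fun x => k x y) a b) c.
Proof.
  intros Hab Hk c; apply continuity_pt_filterlim; intros eps Heps.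
  assert (Heps' : 0 < eps / (b - a + 1)) by (apply Rdiv_lt_0_compat; lra).
  destruct (uniform_continuity_2d_1d k a b c (fun x _ => Hk x c) (mkposreal _ Heps'))
    as [d Hd].
  exists d; split; [apply cond_pos|]; intros y [_ Hy]; simpl in *; unfold R_dist in *.
  assert (Hint_k : forall v, ex_RInt (fun x => k x v) a b).
  { intros v; apply ex_RInt_cont; intros; apply continuity_2d_partial; auto. }
  rewrite <- RInt_minus_R by auto.
  apply Rle_lt_trans with ((b - a) * (eps / (b - a + 1))).
  - apply abs_RInt_le_const; auto.
    + apply (ex_RInt_minus (V:=R_CompleteNormedModule)); auto.
    + intros t Ht; left; apply (Hd t c t y); try (destruct d; simpl in *; lra).
      * unfold Rabs in Hy; destruct Rcase_abs in Hy; lra.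
      * rewrite Rminus_eq_0, Rabs_R0; apply cond_pos.
  - apply Rlt_le_trans with ((b - a + 1) * (eps / (b - a + 1))).
    + apply Rmult_lt_compat_r; lra.
    + right; field; lra.
Qed.

Lemma continuous_RInt_param (k : R -> R -> R) a b :
  (forall x y, continuity_2d_pt k x y) ->
  forall c, continuous (fun y => RInt (fun x => k x y) a b) c.
Proof.
  intros Hk c; destruct (Rle_dec a b) as [Hab|Hba].
  - apply continuous_RInt_param_le; auto.
  - apply (continuous_ext (fun y => - RInt (fun x => k x y) b a)).
    + intros y; rewrite <- (opp_RInt_swap (V:=R_CompleteNormedModule)).
      * unfold opp; simpl; ring.
      * apply ex_RInt_cont; intros; apply continuity_2d_partial; auto.
    + apply (continuous_opp (K:=R_AbsRing) (V:=R_NormedModule)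
               (fun y => RInt (fun x => k x y) b a)).
      apply continuous_RInt_param_le; auto; lra.
Qed.

(* Fubini's theorem on [0,1]^2 for a jointly continuous integrand: integrating
   the first variable over [0,t] instead of [0,1], both iterated integrals
   have derivative [int_0^1 k(t,y) dy] in [t] and vanish at [t = 0]. *)
Lemma RInt_swap01 (k : R -> R -> R) : (forall x y, continuity_2d_pt k x y) ->
  RInt (fun y => RInt (fun x => k x y) 0 1) 0 1
  = RInt (fun x => RInt (fun y => k x y) 0 1) 0 1.
Proof.
  intros Hk.
  set (A := fun x => RInt (fun y => k x y) 0 1).
  set (D := fun t => RInt A 0 t - RInt (fun y => RInt (fun x => k x y) 0 t) 0 1).
  assert (HA : forall x, continuous A x).
  { intros x; apply (continuous_RInt_param (fun y x => k x y)).
    intros u v eps; destruct (Hk v u eps) as [d Hd]; exists d; auto. }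
  assert (Hk1 : forall y x, continuous (fun u => k u y) x)
    by (intros; apply continuity_2d_partial; auto).
  assert (HD : forall t, is_derive D t 0).
  { intros t; apply (is_derive_eq _ _ (A t - A t)); [|lra].
    apply is_derive_minus_R; [apply is_derive_primitive; auto|].
    replace (A t) with (RInt (fun y => Derive (fun u => RInt (fun x => k x y) 0 u) t) 0 1).
    2: { apply RInt_ext; intros y _.
         apply is_derive_unique, (is_derive_primitive (fun x => k x y)); auto. }
    apply (is_derive_RInt_param (fun u y => RInt (fun x => k x y) 0 u) 0 1 t).
    - apply filter_forall; intros u y _; eexists.
      apply (is_derive_primitive (fun x => k x y)); auto.
    - intros y _; apply (continuity_2d_pt_ext k); auto; intros u v.
      symmetry; apply is_derive_unique, (is_derive_primitive (fun x => k x v)); auto.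
    - apply filter_forall; intros u; apply ex_RInt_cont.
      apply (continuous_RInt_param k 0 u); auto. }
  destruct (MVT_gen D 0 1 (fun _ => 0)) as [c [_ Hc]].
  - intros t _; apply HD.
  - intros t _; apply continuity_pt_filterlim, ex_derive_continuous_R.
    eexists; apply HD.
  - unfold D in Hc; rewrite (RInt_point (V:=R_CompleteNormedModule)) in Hc.
    rewrite (RInt_ext (fun y => RInt (fun x => k x y) 0 0) (fun _ => 0)) in Hc.
    + rewrite RInt_zero_R in Hc; unfold A, zero in *; simpl in *; lra.
    + intros y _; apply (RInt_point (V:=R_CompleteNormedModule)).
Qed.

Lemma smooth_continuous f : smooth f -> forall x, continuous f x.
Proof. intros H x; apply ex_derive_continuous_R, (H 0%nat). Qed.

Lemma smooth_ex_derive f : smooth f -> forall x, ex_derive f x.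
Proof. intros H x; exact (H 0%nat x). Qed.

Lemma smooth_continuous_Derive f : smooth f -> forall x, continuous (Derive f) x.
Proof. intros H x; apply ex_derive_continuous_R, (H 1%nat). Qed.

Section CDF.
Variable p : R -> R.
Hypothesis p_cont : forall x, continuous p x.
Hypothesis p_dens : density01 p.

Lemma cdf_is_derive x : is_derive (cdf p) x (p x).
Proof. apply is_derive_primitive; auto. Qed.

Lemma cdf_0 : cdf p 0 = 0.
Proof. apply (RInt_point (V:=R_CompleteNormedModule)). Qed.

Lemma cdf_1 : cdf p 1 = 1.
Proof. apply p_dens. Qed.

Lemma cdf_lt x y : 0 <= x -> x < y -> y <= 1 -> cdf p x < cdf p y.
Proof.
  intros Hx Hxy Hy.
  destruct (MVT_gen (cdf p) x y p) as [c [Hc Hmvt]].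
  - intros z _; apply cdf_is_derive.
  - intros z _; apply continuity_pt_filterlim, ex_derive_continuous_R.
    eexists; apply cdf_is_derive.
  - rewrite Rmin_left, Rmax_right in Hc by lra.
    assert (0 < p c) by (apply p_dens; lra).
    assert (0 < p c * (y - x)) by (apply Rmult_lt_0_compat; lra); lra.
Qed.

Lemma cdf_le x y : 0 <= x -> x <= y -> y <= 1 -> cdf p x <= cdf p y.
Proof.
  intros Hx Hxy Hy; destruct (Req_dec x y) as [->|Hne]; [lra|].
  left; apply cdf_lt; lra.
Qed.

Lemma cdf_range x : 0 <= x <= 1 -> 0 <= cdf p x <= 1.
Proof.
  intros Hx; rewrite <- cdf_0 at 1; rewrite <- cdf_1.
  split; apply cdf_le; lra.
Qed.

Lemma cdf_inj x y : 0 <= x <= 1 -> 0 <= y <= 1 -> cdf p x = cdf p y -> x = y.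
Proof.
  intros Hx Hy E; destruct (Rtotal_order x y) as [H|[H|H]]; auto.
  - assert (cdf p x < cdf p y) by (apply cdf_lt; lra); lra.
  - assert (cdf p y < cdf p x) by (apply cdf_lt; lra); lra.
Qed.

Lemma RInt_cdf_change f : (forall s, 0 <= s <= 1 -> continuous f s) ->
  RInt (fun x => f (cdf p x) * p x) 0 1 = RInt f 0 1.
Proof.
  intros Hf.
  rewrite <- cdf_1 at 2; rewrite <- cdf_0 at 2.
  rewrite <- (RInt_comp (V:=R_CompleteNormedModule) f (cdf p) p).
  - apply RInt_ext; intros; unfold scal; simpl; unfold mult; simpl; ring.
  - intros x Hx; rewrite Rmin_left, Rmax_right in Hx by lra.
    apply Hf, cdf_range; auto.
  - intros x _; split; [apply cdf_is_derive | auto].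
Qed.

End CDF.

(** Inverse CDFs. An inverse CDF [G] is only meaningful on [0,1]; we extend it
    to the whole line by precomposing with the clamp onto [0,1]. *)

Definition clamp01 (s : R) : R := Rmax 0 (Rmin 1 s).

Lemma clamp01_id s : 0 <= s <= 1 -> clamp01 s = s.
Proof. intros; unfold clamp01; rewrite Rmin_right by lra; rewrite Rmax_right; lra. Qed.

Lemma clamp01_range s : 0 <= clamp01 s <= 1.
Proof. unfold clamp01, Rmax, Rmin; repeat destruct Rle_dec; lra. Qed.

Lemma clamp01_continuous s : continuous clamp01 s.
Proof.
  apply continuity_pt_filterlim; intros eps Heps; exists eps; split; auto.
  intros t [_ Ht]; simpl in *; unfold R_dist in *; eapply Rle_lt_trans; [|exact Ht].
  unfold clamp01, Rmax, Rmin; repeat destruct Rle_dec;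
    unfold Rabs; repeat destruct Rcase_abs; lra.
Qed.

(* If [F] is strictly increasing on [0,1] and [H] takes values in [0,1], then
   [H] is continuous wherever [F o H] is: a jump of [H] would show in [F o H]. *)
Lemma continuous_of_incr_comp (F H : R -> R) s0 :
  (forall x y, 0 <= x -> x < y -> y <= 1 -> F x < F y) ->
  (forall s, 0 <= H s <= 1) ->
  continuous (fun s => F (H s)) s0 -> continuous H s0.
Proof.
  intros Hinc Hrange Hc; pose proof (Hrange s0) as Hs0.
  assert (Hle : forall x y, 0 <= x -> x <= y -> y <= 1 -> F x <= F y).
  { intros x y ? ? ?; destruct (Req_dec x y) as [->|]; [lra|left; apply Hinc; lra]. }
  assert (Hnear : forall r, 0 < r ->
            locally s0 (fun s => Rabs (F (H s) - F (H s0)) < r)).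
  { intros r Hr; apply (Hc (fun z => Rabs (z - F (H s0)) < r)).
    exists (mkposreal r Hr); intros z Hz; exact Hz. }
  assert (Hlo : forall eps, 0 < eps -> locally s0 (fun s => H s0 - eps < H s)).
  { intros eps Heps; destruct (Rlt_dec (H s0 - eps) 0).
    - apply filter_forall; intros s; specialize (Hrange s); lra.
    - assert (F (H s0 - eps) < F (H s0)) by (apply Hinc; lra).
      eapply filter_imp; [intros s Hs|apply (Hnear (F (H s0) - F (H s0 - eps))); lra].
      destruct (Rlt_le_dec (H s0 - eps) (H s)) as [|Hs']; auto.
      assert (F (H s) <= F (H s0 - eps)) by (pose proof (Hrange s); apply Hle; lra).
      apply Rabs_def2 in Hs; lra. }
  assert (Hup : forall eps, 0 < eps -> locally s0 (fun s => H s < H s0 + eps)).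
  { intros eps Heps; destruct (Rlt_dec 1 (H s0 + eps)).
    - apply filter_forall; intros s; specialize (Hrange s); lra.
    - assert (F (H s0) < F (H s0 + eps)) by (apply Hinc; lra).
      eapply filter_imp; [intros s Hs|apply (Hnear (F (H s0 + eps) - F (H s0))); lra].
      destruct (Rlt_le_dec (H s) (H s0 + eps)) as [|Hs']; auto.
      assert (F (H s0 + eps) <= F (H s)) by (pose proof (Hrange s); apply Hle; lra).
      apply Rabs_def2 in Hs; lra. }
  apply filterlim_locally; intros [eps Heps].
  eapply filter_imp; [|apply (filter_and _ _ (Hlo eps Heps) (Hup eps Heps))].
  intros s [Hs1 Hs2]; change (Rabs (H s - H s0) < eps); apply Rabs_def1; lra.
Qed.

Definition extend01 (G : R -> R) (s : R) : R := G (clamp01 s).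

Section InverseCDF.
Variables p G : R -> R.
Hypothesis p_cont : forall x, continuous p x.
Hypothesis p_dens : density01 p.
Hypothesis G_inv : is_inv_cdf p G.

Lemma inv_cdf_cdf x : 0 <= x <= 1 -> G (cdf p x) = x.
Proof.
  intros Hx; destruct (G_inv (cdf p x)) as [HG HFG]; [apply cdf_range; auto|].
  apply (cdf_inj p); auto.
Qed.

Lemma inv_cdf_0 : G 0 = 0.
Proof. rewrite <- (cdf_0 p) at 1; apply inv_cdf_cdf; lra. Qed.

Lemma inv_cdf_1 : G 1 = 1.
Proof. rewrite <- (cdf_1 p p_dens) at 1; apply inv_cdf_cdf; lra. Qed.

(* [G] maps (0,1) into (0,1), since [cdf p] maps the endpoints to themselves. *)
Lemma inv_cdf_interior s : 0 < s < 1 -> 0 < G s < 1.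
Proof.
  intros Hs; destruct (G_inv s) as [HG HFG]; [lra|].
  assert (G s <> 0) by (intros E; rewrite E, cdf_0 in HFG; lra).
  assert (G s <> 1) by (intros E; rewrite E, (cdf_1 p p_dens) in HFG; lra).
  lra.
Qed.

Lemma extend01_id s : 0 <= s <= 1 -> extend01 G s = G s.
Proof. intros; unfold extend01; rewrite clamp01_id; auto. Qed.

Lemma extend01_range s : 0 <= extend01 G s <= 1.
Proof. apply G_inv, clamp01_range. Qed.

Lemma cdf_extend01 s : cdf p (extend01 G s) = clamp01 s.
Proof. apply G_inv, clamp01_range. Qed.

Lemma extend01_cdf x : 0 <= x <= 1 -> extend01 G (cdf p x) = x.
Proof. intros; rewrite extend01_id by (apply cdf_range; auto); apply inv_cdf_cdf; auto. Qed.

Lemma extend01_continuous s : continuous (extend01 G) s.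
Proof.
  apply (continuous_of_incr_comp (cdf p)).
  - intros; apply cdf_lt; auto.
  - apply extend01_range.
  - apply (continuous_ext clamp01); [intros; symmetry; apply cdf_extend01|].
    apply clamp01_continuous.
Qed.

Lemma inv_cdf_is_derive s : 0 < s < 1 -> is_derive G s (/ p (G s)).
Proof.
  intros Hs.
  assert (Prf : forall a, G 0 <= a <= G 1 -> derivable_pt (cdf p) a).
  { intros a _; exists (p a); apply is_derive_Reals, cdf_is_derive; auto. }
  assert (Prg : continuity_pt G s).
  { apply continuity_pt_filterlim; change (continuous G s).
    apply (continuous_ext_loc G (extend01 G)).
    - apply (locally_interval _ s 0 1); simpl; try lra.
      intros; apply extend01_id; lra.
    - apply extend01_continuous. }
  assert (Hincr : G 0 <= G s <= G 1).
  { rewrite inv_cdf_0, inv_cdf_1; apply G_inv; lra. }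
  assert (Hpos : 0 < p (G s)) by (apply p_dens, G_inv; lra).
  assert (HD : derive_pt (cdf p) (G s) (Prf (G s) Hincr) = p (G s)).
  { apply derive_pt_eq_0, is_derive_Reals, cdf_is_derive; auto. }
  pose proof (derivable_pt_lim_recip_interv (cdf p) G 0 1 s Prf Prg
                ltac:(lra) Hs Hincr) as Hrecip.
  rewrite HD in Hrecip; apply is_derive_Reals.
  replace (/ p (G s)) with (1 / p (G s)) by (field; lra).
  apply Hrecip; [|lra]; intros x Hx; apply G_inv; auto.
Qed.

Lemma extend01_is_derive s : 0 < s < 1 -> is_derive (extend01 G) s (/ p (G s)).
Proof.
  intros Hs; apply (is_derive_ext_loc G); [|apply inv_cdf_is_derive; auto].
  apply (locally_interval _ s 0 1); simpl; try lra.
  intros; symmetry; apply extend01_id; lra.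
Qed.

Lemma Derive_inv_cdf s : 0 < s < 1 -> Derive G s = / p (G s).
Proof. intros; apply is_derive_unique, inv_cdf_is_derive; auto. Qed.

Lemma RInt_pushforward f : (forall x, 0 <= x <= 1 -> continuous f x) ->
  RInt (fun x => f x * p x) 0 1 = RInt (fun s => f (extend01 G s)) 0 1.
Proof.
  intros Hf; etransitivity; [|apply (RInt_cdf_change p p_cont p_dens)].
  - apply RInt_ext01; intros x Hx; rewrite extend01_cdf by lra; reflexivity.
  - intros s _; apply continuous_comp_R; [apply extend01_continuous|].
    apply Hf, extend01_range.
Qed.

End InverseCDF.

Lemma Utilde_inv_continuous (U r : R -> R) (x : R) :
  C2_pos U -> continuous r x -> 0 < r x -> continuous (fun y => Utilde U (/ r y)) x.
Proof.
  intros U_C2 r_cont r_pos; unfold Utilde; apply continuous_mult_R.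
  - apply continuous_Rinv_comp; auto; lra.
  - apply (continuous_ext (fun y => U (r y))); [intros; rewrite Rinv_inv; auto|].
    apply continuous_comp_R; auto; apply ex_derive_continuous_R, U_C2; auto.
Qed.

(* The internal energy in quantile coordinates: [U (r x) = Utilde U (1 / r x) * r x]. *)
Lemma internal_fun_quantile U : C2_pos U -> forall r G,
  (forall x, continuous r x) -> density01 r -> is_inv_cdf r G ->
  internal_fun U r = RInt (fun s => Utilde U (/ r (extend01 G s))) 0 1.
Proof.
  intros U_C2 r G r_cont r_dens G_inv; unfold internal_fun.
  rewrite <- (RInt_pushforward r G r_cont r_dens G_inv (fun x => Utilde U (/ r x))).
  - apply RInt_ext01; intros x Hx; assert (0 < r x) by (apply r_dens; lra).
    unfold Utilde; rewrite Rinv_inv; field; lra.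
  - intros x Hx; apply Utilde_inv_continuous; auto; apply r_dens; lra.
Qed.

Lemma interaction_fun_quantile W : (forall z, continuous W z) -> forall r G,
  (forall x, continuous r x) -> density01 r -> is_inv_cdf r G ->
  interaction_fun W r
  = / 2 * RInt (fun t => RInt (fun s => W (extend01 G t - extend01 G s)) 0 1) 0 1.
Proof.
  intros W_cont r G r_cont r_dens G_inv; unfold interaction_fun; f_equal.
  pose proof (extend01_continuous r G r_cont r_dens G_inv) as e_cont.
  rewrite (RInt_ext01 _ (fun x => RInt (fun s => W (x - extend01 G s)) 0 1 * r x)).
  - rewrite (RInt_pushforward r G r_cont r_dens G_inv); [reflexivity|].
    intros; apply (continuous_RInt_param (fun s x => W (x - extend01 G s))).
    auto with cont.
  - intros x _; rewrite <- RInt_mult_const_r by (apply ex_RInt_cont; auto with cont).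
    rewrite <- (RInt_pushforward r G r_cont r_dens G_inv (fun xt => W (x - xt) * r x)).
    + reflexivity.
    + auto with cont.
Qed.

Lemma Derive_even (W : R -> R) z : (forall x, ex_derive W x) ->
  (forall z, -1 <= z <= 1 -> W (- z) = W z) -> -1 < z < 1 ->
  Derive W (- z) = - Derive W z.
Proof.
  intros W_ex W_even Hz.
  assert (H : is_derive W z (- Derive W (- z))).
  { apply (is_derive_ext_loc (fun x => W (- x))).
    - apply (locally_interval _ z (-1) 1); simpl; try lra.
      intros; apply W_even; lra.
    - auto_derive; [auto | change (fun x : R => W x) with W; ring]. }
  apply is_derive_unique in H; lra.
Qed.

Section Transport.
Variables p q Gp Gq : R -> R.
Hypotheses (p_smooth : smooth p) (q_smooth : smooth q).
Hypotheses (p_dens : density01 p) (q_dens : density01 q).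
Hypotheses (Gp_inv : is_inv_cdf p Gp) (Gq_inv : is_inv_cdf q Gq).

Let p_cont := smooth_continuous p p_smooth.
Let q_cont := smooth_continuous q q_smooth.
Let ep_cont := extend01_continuous p Gp p_cont p_dens Gp_inv.
Let eq_cont := extend01_continuous q Gq q_cont q_dens Gq_inv.
#[local] Hint Resolve ep_cont eq_cont : cont.

Lemma RInt_transport_term (g : R -> R) : (forall x, 0 <= x <= 1 -> continuous g x) ->
  RInt (fun x => g x * (transport_map Gp q x - x) * q x) 0 1
  = RInt (fun s => g (extend01 Gq s) * (extend01 Gp s - extend01 Gq s)) 0 1.
Proof.
  intros Hg.
  rewrite (RInt_ext01 _ (fun x => g x * (extend01 Gp (cdf q x) - x) * q x)).
  2: { intros x Hx; unfold transport_map.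
       rewrite extend01_id by (apply cdf_range; auto; lra); reflexivity. }
  rewrite (RInt_pushforward q Gq); auto.
  - apply RInt_ext01; intros s Hs.
    rewrite cdf_extend01, clamp01_id by (auto; lra); reflexivity.
  - intros x Hx; apply continuous_mult_R; auto.
    apply continuous_minus_R; auto with cont.
    apply continuous_comp_R; auto.
    apply ex_derive_continuous_R; eexists; apply cdf_is_derive; auto.
Qed.

Lemma transport_bregman_potential (V : R -> R) : smooth V ->
  transport_bregman (potential_fun V p) (potential_fun V q)
    (potential_var V q) (transport_map Gp q) q
  = RInt (fun s => bregman V (Gp s) (Gq s)) 0 1.
Proof.
  intros V_smooth.
  pose proof (smooth_continuous V V_smooth) as V_cont.
  pose proof (smooth_continuous_Derive V V_smooth) as DV_cont.
  unfold transport_bregman, potential_fun, potential_var.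
  rewrite (RInt_pushforward p Gp), (RInt_pushforward q Gq), RInt_transport_term by auto.
  rewrite <- RInt_minus3 by auto with cont.
  apply RInt_ext01; intros s Hs; unfold bregman.
  rewrite !extend01_id by lra; reflexivity.
Qed.

Section Interaction.
Variable W : R -> R.
Hypothesis W_smooth : smooth W.
Hypothesis W_even : forall z, -1 <= z <= 1 -> W (- z) = W z.

Let W_cont := smooth_continuous W W_smooth.
Let DW_cont := smooth_continuous_Derive W W_smooth.

Let k (t s : R) : R := Derive W (extend01 Gq t - extend01 Gq s) * (extend01 Gp t - extend01 Gq t).

Let k_cont t s : continuity_2d_pt k t s.
Proof. unfold k; auto with cont. Qed.
Let k_swap_cont t s : continuity_2d_pt (fun t s => k s t) t s.
Proof. unfold k; auto with cont. Qed.

Lemma Derive_interaction_var x :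
  Derive (interaction_var W q) x = RInt (fun s => Derive W (x - extend01 Gq s)) 0 1.
Proof.
  assert (dW : forall t u, is_derive (fun u => W (u - t) * q t) u (Derive W (u - t) * q t)).
  { intros t u; auto_derive; [apply (smooth_ex_derive W); auto|].
    now rewrite Rmult_1_l. }
  unfold interaction_var; apply is_derive_unique.
  eapply is_derive_eq.
  - apply (is_derive_RInt_param (fun u t => W (u - t) * q t) 0 1 x).
    + apply filter_forall; intros u t _; eexists; apply dW.
    + intros t _; apply (continuity_2d_pt_ext (fun u v => Derive W (u - v) * q v)).
      * intros u v; symmetry; apply is_derive_unique, dW.
      * auto with cont.
    + apply filter_forall; intros u; apply ex_RInt_cont; auto with cont.
  - rewrite <- (RInt_pushforward q Gq q_cont q_dens Gq_inv (fun xt => Derive W (x - xt)))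
      by auto with cont.
    apply RInt_ext; intros t _; apply is_derive_unique, dW.
Qed.

Lemma interaction_transport_term :
  RInt (fun x => Derive (interaction_var W q) x * (transport_map Gp q x - x) * q x) 0 1
  = RInt (fun t => RInt (fun s => k t s) 0 1) 0 1.
Proof.
  rewrite (RInt_ext01
    (fun x => Derive (interaction_var W q) x * (transport_map Gp q x - x) * q x)
    (fun x => RInt (fun s => Derive W (x - extend01 Gq s)) 0 1
              * (transport_map Gp q x - x) * q x))
    by (intros; rewrite Derive_interaction_var; reflexivity).
  rewrite RInt_transport_term.
  - apply RInt_ext; intros t _; unfold k.
    rewrite <- RInt_mult_const_r by (apply ex_RInt_cont; auto with cont); reflexivity.
  - intros; apply (continuous_RInt_param (fun s x => Derive W (x - extend01 Gq s))).
    auto with cont.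
Qed.

(* Pointwise identity behind (ii): evenness of [W] and oddness of [W'] turn the
   Bregman integrand into the two energies minus the symmetrized cross term. *)
Lemma interaction_bregman_pointwise s t : 0 < s < 1 -> 0 < t < 1 ->
  bregman W (Gp s - Gp t) (Gq s - Gq t)
  = W (extend01 Gp t - extend01 Gp s) - W (extend01 Gq t - extend01 Gq s)
    - (k s t + k t s).
Proof.
  intros Hs Ht; unfold bregman, k; rewrite !extend01_id by lra.
  assert (0 < Gp s < 1 /\ 0 < Gp t < 1) by (split; apply (inv_cdf_interior p); auto).
  assert (0 < Gq s < 1 /\ 0 < Gq t < 1) by (split; apply (inv_cdf_interior q); auto).
  replace (Gp s - Gp t) with (- (Gp t - Gp s)) by ring.
  replace (Gq s - Gq t) with (- (Gq t - Gq s)) by ring.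
  rewrite !W_even, Derive_even by (auto using smooth_ex_derive; lra).
  ring.
Qed.

Lemma transport_bregman_interaction :
  transport_bregman (interaction_fun W p) (interaction_fun W q)
    (interaction_var W q) (transport_map Gp q) q
  = / 2 * RInt (fun st => RInt (fun s =>
        bregman W (Gp s - Gp st) (Gq s - Gq st)) 0 1) 0 1.
Proof.
  set (energy := fun e : R -> R => RInt (fun t => RInt (fun s => W (e t - e s)) 0 1) 0 1).
  assert (Hrhs : RInt (fun t => RInt (fun s => bregman W (Gp s - Gp t) (Gq s - Gq t)) 0 1) 0 1
    = energy (extend01 Gp) - energy (extend01 Gq)
      - (RInt (fun t => RInt (fun s => k s t) 0 1) 0 1
         + RInt (fun t => RInt (fun s => k t s) 0 1) 0 1)).
  { rewrite (RInt_ext01 _ (fun t => RInt (fun s => W (extend01 Gp t - extend01 Gp s)) 0 1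
                              - RInt (fun s => W (extend01 Gq t - extend01 Gq s)) 0 1
                              - (RInt (fun s => k s t) 0 1 + RInt (fun s => k t s) 0 1))).
    - assert (Ep : forall t, continuous
                (fun t => RInt (fun s => W (extend01 Gp t - extend01 Gp s)) 0 1) t)
        by (apply (continuous_RInt_param (fun s t => _)); auto with cont).
      assert (Eq : forall t, continuous
                (fun t => RInt (fun s => W (extend01 Gq t - extend01 Gq s)) 0 1) t)
        by (apply (continuous_RInt_param (fun s t => _)); auto with cont).
      assert (K1 : forall t, continuous (fun t => RInt (fun s => k s t) 0 1) t)
        by (apply (continuous_RInt_param k); auto).
      assert (K2 : forall t, continuous (fun t => RInt (fun s => k t s) 0 1) t)
        by (apply (continuous_RInt_param (fun s t => k t s)); auto).
      unfold energy; rewrite RInt_minus3, RInt_plus_R; auto using ex_RInt_cont with cont.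
    - intros t Ht; unfold k.
      rewrite <- RInt_plus_R, <- RInt_minus3 by (auto using ex_RInt_cont with cont).
      apply RInt_ext01; intros s Hs; apply interaction_bregman_pointwise; auto. }
  unfold transport_bregman.
  rewrite (interaction_fun_quantile W W_cont p Gp), (interaction_fun_quantile W W_cont q Gq),
    interaction_transport_term, Hrhs, (RInt_swap01 k) by auto.
  fold (energy (extend01 Gp)) (energy (extend01 Gq)); lra.
Qed.
End Interaction.

Section Internal.
Variable U : R -> R.
Hypothesis U_C2 : C2_pos U.

Let U_ex_derive y : 0 < y -> ex_derive U y.
Proof. apply U_C2. Qed.
Let DU_ex_derive y : 0 < y -> ex_derive (Derive U) y.
Proof. apply U_C2. Qed.
Let DDU_cont y : 0 < y -> continuous (Derive (Derive U)) y.
Proof. apply U_C2. Qed.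

Lemma Derive_Utilde z : 0 < z -> Derive (Utilde U) z = U (/ z) - Derive U (/ z) / z.
Proof.
  intros Hz; apply is_derive_unique; unfold Utilde; auto_derive.
  - split; [apply U_ex_derive, Rinv_0_lt_compat; lra | split; [lra | exact I]].
  - change (fun x : R => U x) with U; field; lra.
Qed.

(* By [Derive_Utilde], [psi y = Utilde' (1 / q y)]. *)
Let psi (y : R) : R := U (q y) - Derive U (q y) * q y.

Let q_pos s : 0 < q (extend01 Gq s).
Proof. apply q_dens, (extend01_range q); auto. Qed.
Let p_pos s : 0 < p (extend01 Gp s).
Proof. apply p_dens, (extend01_range p); auto. Qed.

Lemma psi_is_derive y : 0 < q y ->
  is_derive psi y (- Derive (Derive U) (q y) * Derive q y * q y).
Proof.
  intros Hy; unfold psi.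
  assert (Dq : is_derive q y (Derive q y))
    by (apply Derive_correct, (smooth_ex_derive q); auto).
  assert (DU : is_derive U (q y) (Derive U (q y))) by (apply Derive_correct; auto).
  assert (DDU : is_derive (Derive U) (q y) (Derive (Derive U) (q y)))
    by (apply Derive_correct; auto).
  eapply is_derive_eq.
  - apply is_derive_minus_R; [apply (is_derive_comp_R U q); eauto|].
    apply is_derive_mult_R; [apply (is_derive_comp_R (Derive U) q)|]; eauto.
  - cbv beta; ring.
Qed.

Let psi_quantile_cont s : continuous (fun s => psi (extend01 Gq s)) s.
Proof.
  apply continuous_comp_R; auto.
  apply ex_derive_continuous_R; eexists; apply psi_is_derive, q_pos.
Qed.
Let recip_p_cont s : continuous (fun s => / p (extend01 Gp s)) s.
Proof. apply continuous_Rinv_comp; auto with cont; apply Rgt_not_eq, p_pos. Qed.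
Let recip_q_cont s : continuous (fun s => / q (extend01 Gq s)) s.
Proof. apply continuous_Rinv_comp; auto with cont; apply Rgt_not_eq, q_pos. Qed.
#[local] Hint Resolve psi_quantile_cont recip_p_cont recip_q_cont : cont.

(* Integration by parts in the quantile variable, using [Gq' = 1 / q o Gq] and
   [Gp' = 1 / p o Gp]; the boundary terms vanish since both inverse CDFs fix 0
   and 1. *)
Lemma RInt_internal_by_parts :
  RInt (fun s => psi (extend01 Gq s) * (/ p (extend01 Gp s) - / q (extend01 Gq s))) 0 1
  = RInt (fun s => Derive (Derive U) (q (extend01 Gq s)) * Derive q (extend01 Gq s)
                   * (extend01 Gp s - extend01 Gq s)) 0 1.
Proof.
  set (a := fun s => psi (extend01 Gq s) * (/ p (extend01 Gp s) - / q (extend01 Gq s))).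
  set (b := fun s => Derive (Derive U) (q (extend01 Gq s)) * Derive q (extend01 Gq s)
                     * (extend01 Gp s - extend01 Gq s)).
  set (Fn := fun s => psi (extend01 Gq s) * (extend01 Gp s - extend01 Gq s)).
  assert (a_cont : forall s, continuous a s) by (unfold a; auto with cont).
  assert (b_cont : forall s, continuous b s).
  { intros s; apply continuous_mult_R; [apply continuous_mult_R|auto with cont].
    - apply (continuous_comp_R (fun s => q (extend01 Gq s))); [auto with cont|].
      apply DDU_cont, q_pos.
    - apply continuous_comp_R; auto; apply smooth_continuous_Derive; auto. }
  assert (Hparts : RInt (fun s => a s - b s) 0 1 = Fn 1 - Fn 0).
  { apply RInt_interior_derive; [|unfold Fn; auto with cont|auto with cont].
    intros t Ht.
    assert (Hq : 0 < q (Gq t)) by (apply q_dens, Gq_inv; lra).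
    assert (Hp : 0 < p (Gp t)) by (apply p_dens, Gp_inv; lra).
    eapply is_derive_eq.
    - apply is_derive_mult_R.
      + apply (is_derive_comp_R psi (extend01 Gq));
          [apply psi_is_derive, q_pos | apply (extend01_is_derive q Gq); auto].
      + apply is_derive_minus_R;
          [apply (extend01_is_derive p Gp) | apply (extend01_is_derive q Gq)]; auto.
    - unfold a, b, psi; cbv beta; rewrite !extend01_id by lra; field; lra. }
  rewrite RInt_minus_R in Hparts by (apply ex_RInt_cont; auto).
  unfold Fn in Hparts; rewrite !extend01_id, (inv_cdf_0 p Gp), (inv_cdf_1 p Gp),
    (inv_cdf_0 q Gq), (inv_cdf_1 q Gq) in Hparts by (auto; lra).
  lra.
Qed.

Lemma transport_bregman_internal :
  transport_bregman (internal_fun U p) (internal_fun U q)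
    (internal_var U q) (transport_map Gp q) q
  = RInt (fun s => bregman (Utilde U) (Derive Gp s) (Derive Gq s)) 0 1.
Proof.
  unfold transport_bregman.
  rewrite (internal_fun_quantile U U_C2 p Gp), (internal_fun_quantile U U_C2 q Gq) by auto.
  rewrite (RInt_ext01
    (fun x => Derive (internal_var U q) x * (transport_map Gp q x - x) * q x)
    (fun x => Derive (Derive U) (q x) * Derive q x * (transport_map Gp q x - x) * q x)).
  2: { intros x Hx; unfold internal_var; rewrite Derive_comp; [ring| |].
       - apply DU_ex_derive, q_dens; lra.
       - apply (smooth_ex_derive q); auto. }
  rewrite RInt_transport_term.
  2: { intros x Hx; assert (0 < q x) by (apply q_dens; lra).
       apply continuous_mult_R; [apply continuous_comp_R; auto|].
       apply smooth_continuous_Derive; auto. }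
  rewrite <- RInt_internal_by_parts, <- RInt_minus3.
  - apply RInt_ext01; intros s Hs; unfold bregman, psi.
    assert (0 < q (Gq s)) by (apply q_dens, Gq_inv; lra).
    assert (0 < p (Gp s)) by (apply p_dens, Gp_inv; lra).
    rewrite (Derive_inv_cdf p Gp), (Derive_inv_cdf q Gq), Derive_Utilde,
      !extend01_id, Rinv_inv by (auto; try lra; apply Rinv_0_lt_compat; auto).
    field; lra.
  - intros s; apply (Utilde_inv_continuous U (fun s => p (extend01 Gp s))); auto with cont.
  - intros s; apply (Utilde_inv_continuous U (fun s => q (extend01 Gq s))); auto with cont.
  - auto with cont.
Qed.
End Internal.

End Transport.

Theorem mainTheorem3 :
  forall (p q Gp Gq : R -> R),
    smooth p -> smooth q -> density01 p -> density01 q ->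
    is_inv_cdf p Gp -> is_inv_cdf q Gq ->
    (* (i) potential energy *)
    (forall V : R -> R, smooth V ->
       transport_bregman (potential_fun V p) (potential_fun V q)
         (potential_var V q) (transport_map Gp q) q
       = RInt (fun s => bregman V (Gp s) (Gq s)) 0 1)
    /\
    (* (ii) interaction energy *)
    (forall W : R -> R, smooth W -> (forall z, -1 <= z <= 1 -> W (- z) = W z) ->
       transport_bregman (interaction_fun W p) (interaction_fun W q)
         (interaction_var W q) (transport_map Gp q) q
       = / 2 * RInt (fun st => RInt (fun s =>
             bregman W (Gp s - Gp st) (Gq s - Gq st)) 0 1) 0 1)
    /\
    (* (iii) internal energy *)
    (forall U : R -> R, C2_pos U ->
       transport_bregman (internal_fun U p) (internal_fun U q)
         (internal_var U q) (transport_map Gp q) q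
       = RInt (fun s => bregman (Utilde U) (Derive Gp s) (Derive Gq s)) 0 1).
Proof.
  intros p q Gp Gq p_smooth q_smooth p_dens q_dens Gp_inv Gq_inv.
  split; [|split].
  - intros V V_smooth; apply transport_bregman_potential; auto.
  - intros W W_smooth W_even; apply transport_bregman_interaction; auto.
  - intros U U_C2; apply transport_bregman_internal; auto.
Qed.
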